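(* For every $\lambda\ge0$ the sequence $\big(\mathbb{E}[e^{-\lambda Z_n}]\big)_{n\ge1}$ is bounded. Moreover, \[ \mathbb{E}[e^{-Z_n}]-1\sim-\frac{\log n}{2n}\quad\text{as } n\to\infty, \] meaning that the ratio of the two sides tends to $1$.
   Context: $Z_n=\frac{T_n}{n}-\log n$, where $T_n=\sum_{i=1}^n\tau_i^n$ with $\tau_1^n,\dots,\tau_n^n$ independent and $\tau_i^n$ geometric on $\{1,2,\dots\}$ with parameter $\frac{n-i+1}{n}$; equivalently $T_n$ is the coupon collector's completion time for $n$ coupons. *)

From Stdlib Require Import Reals Lra Lia.
From Coquelicot Require Import Coquelicot.
Open Scope R_scope.

Definition geom_pmf (p : R) (k : nat) : R :=
  match k with
  | O => 0
  | S j => (1 - p) ^ j * p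
  end.

(* Parameter of tau_i^n : (n - i + 1) / n, for 1 <= i <= n. *)
Definition cc_param (n i : nat) : R := INR (n - i + 1) / INR n.

(* Law (probability mass function on nat) of tau_1^n + ... + tau_m^n,
   the tau_i^n being independent: iterated convolution of the laws. *)
Fixpoint partial_law (n m : nat) (k : nat) : R :=
  match m with
  | O => if Nat.eqb k 0 then 1 else 0
  | S m' => sum_f_R0 (fun j => partial_law n m' j * geom_pmf (cc_param n (S m')) (k - j)) k
  end.

Definition T_law (n : nat) (k : nat) : R := partial_law n n k.

(* Value of Z_n = T_n / n - log n on the event {T_n = k}. *)
Definition Z_val (n k : nat) : R := INR k / INR n - ln (INR n).

Definition mgf_term (lam : R) (n : nat) (k : nat) : R :=
  T_law n k * exp (- lam * Z_val n k).

(* E[exp(-lam Z_n)] (as a series; finiteness is asserted separately). *)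
Definition mgf_Z (lam : R) (n : nat) : R := Series (mgf_term lam n).

From Stdlib Require Import Reals Lra Lia.
From Coquelicot Require Import Coquelicot.
Open Scope R_scope.

(* With [x = exp (- lam / n)] we have [E[exp (- lam Z_n)] = n ^ lam E[x ^ T_n]], and
   the generating function of [T_n] is the product of those of the geometric
   laws.  This gives the closed form
     [E[exp (- lam Z_n)] = n ^ lam * prod_(q = 1..n) q / (q + c)],
   [c = n (exp (lam / n) - 1) >= lam].  Bounding each factor by
   [((q + lam) / (q + 1 + lam)) ^ lam] makes the product telescope, so the whole
   expression is at most [(1 + lam) ^ lam].
   For [lam = 1], [c = 1 + d] with [d ~ 1 / (2 n)], and the product is
   [1 / (n + 1)] times [1 / prod_(q = 1..n) (1 + d / (q + 1))].  The last factor
   lies between [1 - d H] and [1 / (1 + d H)], where [H = sum_(q = 1..n) 1 / (q + 1)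
   ~ log n], hence [E[exp (- Z_n)] - 1 = - d H (1 + o(1)) + O(1 / n)
   ~ - log n / (2 n)]. *)

Fixpoint rprod (f : nat -> R) (m : nat) : R :=
  match m with
  | O => 1
  | S m' => rprod f m' * f m
  end.

Fixpoint rsum (f : nat -> R) (m : nat) : R :=
  match m with
  | O => 0
  | S m' => rsum f m' + f m
  end.

Lemma rprod_ext f g m :
  (forall q, (1 <= q <= m)%nat -> f q = g q) -> rprod f m = rprod g m.
Proof.
  induction m as [|m IH]; intros Hfg; simpl; [reflexivity|].
  rewrite IH by (intros q Hq; apply Hfg; lia).
  rewrite Hfg by lia; reflexivity.
Qed.

Lemma rprod_mult f g m : rprod (fun q => f q * g q) m = rprod f m * rprod g m.
Proof. induction m as [|m IH]; simpl; [ring|]. rewrite IH; ring. Qed.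

Lemma rprod_inv f m : rprod (fun q => / f q) m = / rprod f m.
Proof.
  induction m as [|m IH]; simpl; [now rewrite Rinv_1|].
  now rewrite IH, Rinv_mult.
Qed.

Lemma rprod_le f g m :
  (forall q, (1 <= q <= m)%nat -> 0 <= f q <= g q) ->
  0 <= rprod f m <= rprod g m.
Proof.
  induction m as [|m IH]; intros Hfg; simpl; [lra|].
  destruct IH as [IH0 IH1]; [intros q Hq; apply Hfg; lia|].
  destruct (Hfg (S m)) as [H0 H1]; [lia|].
  split; [now apply Rmult_le_pos|now apply Rmult_le_compat].
Qed.

Lemma rprod_telescope g m :
  (forall q, (1 <= q)%nat -> g q <> 0) ->
  rprod (fun q => g (S q) / g q) m = g (S m) / g 1%nat.
Proof.
  intros Hg. induction m as [|m IH]; simpl rprod.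
  - field. apply Hg; lia.
  - rewrite IH. field. split; apply Hg; lia.
Qed.

Lemma rprod_shift f m : rprod f (S m) = f 1%nat * rprod (fun q => f (S q)) m.
Proof.
  induction m as [|m IH]; [simpl; ring|].
  change (rprod f (S (S m))) with (rprod f (S m) * f (S (S m))).
  rewrite IH; simpl; ring.
Qed.

Lemma rprod_rev f m : rprod (fun i => f (S m - i)%nat) m = rprod f m.
Proof.
  revert f. induction m as [|m IH]; intros f; [reflexivity|].
  rewrite (rprod_shift f), <- (IH (fun q => f (S q))); cbn [rprod].
  replace (S (S m) - S m)%nat with 1%nat by lia.
  rewrite Rmult_comm. f_equal.
  apply rprod_ext. intros i Hi. f_equal. lia.
Qed.

Lemma rsum_le f g m :
  (forall q, (1 <= q <= m)%nat -> f q <= g q) -> rsum f m <= rsum g m.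
Proof.
  induction m as [|m IH]; intros Hfg; simpl; [lra|].
  apply Rplus_le_compat; [apply IH; intros q Hq|]; apply Hfg; lia.
Qed.

Lemma rsum_nonneg f m : (forall q, (1 <= q <= m)%nat -> 0 <= f q) -> 0 <= rsum f m.
Proof.
  induction m as [|m IH]; intros Hf; simpl; [lra|].
  apply Rplus_le_le_0_compat; [apply IH; intros q Hq|]; apply Hf; lia.
Qed.

Lemma rsum_scal c f m : rsum (fun q => c * f q) m = c * rsum f m.
Proof. induction m as [|m IH]; simpl; [ring|]. rewrite IH; ring. Qed.

Lemma rsum_telescope g m : rsum (fun q => g (S q) - g q) m = g (S m) - g 1%nat.
Proof. induction m as [|m IH]; simpl rsum; [ring|]. rewrite IH; ring. Qed.

Lemma rprod_one_plus_ge a m :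
  (forall q, (1 <= q <= m)%nat -> 0 <= a q) ->
  1 + rsum a m <= rprod (fun q => 1 + a q) m.
Proof.
  induction m as [|m IH]; intros Ha; simpl; [lra|].
  assert (IHm : 1 + rsum a m <= rprod (fun q => 1 + a q) m)
    by (apply IH; intros q Hq; apply Ha; lia).
  assert (Hsum : 0 <= rsum a m) by (apply rsum_nonneg; intros q Hq; apply Ha; lia).
  assert (Hm : 0 <= a (S m)) by (apply Ha; lia).
  nra.
Qed.

Lemma inv_rprod_one_plus_ge a m :
  (forall q, (1 <= q <= m)%nat -> 0 <= a q) ->
  1 - rsum a m <= / rprod (fun q => 1 + a q) m.
Proof.
  induction m as [|m IH]; intros Ha; simpl; [rewrite Rinv_1; lra|].
  assert (IHm : 1 - rsum a m <= / rprod (fun q => 1 + a q) m)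
    by (apply IH; intros q Hq; apply Ha; lia).
  assert (Hsum : 0 <= rsum a m) by (apply rsum_nonneg; intros q Hq; apply Ha; lia).
  assert (HQ : 1 + rsum a m <= rprod (fun q => 1 + a q) m)
    by (apply rprod_one_plus_ge; intros q Hq; apply Ha; lia).
  assert (Hm : 0 <= a (S m)) by (apply Ha; lia).
  set (Q := rprod (fun q => 1 + a q) m) in *.
  (* [/ (Q (1 + a)) >= / Q * (1 - a) >= / Q - a], using [/ Q <= 1]. *)
  assert (HiQ : 0 < / Q <= 1) by (split; [apply Rinv_0_lt_compat; lra|
    rewrite <- Rinv_1; apply Rinv_le_contravar; lra]).
  assert (Hia : 1 - a (S m) <= / (1 + a (S m))).
  { apply Rmult_le_reg_r with (1 + a (S m)); [lra|].
    rewrite Rinv_l by lra. nra. }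
  rewrite Rinv_mult. nra.
Qed.

Lemma exp_le_exp x y : x <= y -> exp x <= exp y.
Proof. intros [Hlt|Heq]; [left; now apply exp_increasing|right; now rewrite Heq]. Qed.

Lemma ln_sub_le a b : 0 < a -> 0 < b -> ln b - ln a <= (b - a) / a.
Proof.
  intros Ha Hb. rewrite <- ln_div by assumption.
  replace ((b - a) / a) with (b / a - 1) by (field; lra).
  rewrite <- (ln_exp (b / a - 1)).
  apply ln_le; [apply Rdiv_lt_0_compat; assumption|].
  pose proof (exp_ineq1_le (b / a - 1)). lra.
Qed.

Definition geom_pgf (p x : R) : R := p * x / (1 - (1 - p) * x).

Lemma geom_pmf_nonneg p k : 0 <= p <= 1 -> 0 <= geom_pmf p k.
Proof.
  intros Hp. destruct k; simpl; [lra|].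
  apply Rmult_le_pos; [apply pow_le|]; lra.
Qed.

Lemma is_series_geom_pgf p x : 0 < p <= 1 -> 0 <= x <= 1 ->
  is_series (fun k => geom_pmf p k * x ^ k) (geom_pgf p x).
Proof.
  intros Hp Hx. apply is_series_decr_1.
  assert (Hq : Rabs ((1 - p) * x) < 1) by (rewrite Rabs_pos_eq; nra).
  match goal with |- is_series _ ?l => replace l with (/ (1 - (1 - p) * x) * (p * x)) end.
  - eapply is_series_ext; [|exact (is_series_scal_r _ _ _ (is_series_geom _ Hq))].
    intros k. simpl. rewrite Rpow_mult_distr. ring.
  - unfold geom_pgf, plus, opp; simpl. field. nra.
Qed.

Lemma cc_param_bounds n i : (1 <= i <= n)%nat -> 0 < cc_param n i <= 1.
Proof.
  intros Hi. unfold cc_param.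
  assert (1 <= INR (n - i + 1)) by (apply (le_INR 1); lia).
  assert (INR (n - i + 1) <= INR n) by (apply le_INR; lia).
  split; [apply Rdiv_lt_0_compat; lra|].
  unfold Rdiv. rewrite <- (Rinv_r (INR n)) by lra.
  apply Rmult_le_compat_r; [left; apply Rinv_0_lt_compat|]; lra.
Qed.

Lemma partial_law_nonneg n m k : (m <= n)%nat -> 0 <= partial_law n m k.
Proof.
  revert k. induction m as [|m IH]; intros k Hm; simpl.
  - destruct (Nat.eqb k 0); lra.
  - apply cond_pos_sum. intros j. apply Rmult_le_pos; [apply IH; lia|].
    assert (0 < cc_param n (S m) <= 1) by (apply cc_param_bounds; lia).
    apply geom_pmf_nonneg. lra.
Qed.

Lemma is_series_partial_law_pgf n m x : (m <= n)%nat -> 0 <= x <= 1 ->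
  is_series (fun k => partial_law n m k * x ^ k)
            (rprod (fun i => geom_pgf (cc_param n i) x) m).
Proof.
  intros Hm Hx. induction m as [|m IH].
  - (* [0 ^ k] is the indicator of [k = 0]. *)
    replace (rprod _ 0) with (/ (1 - 0)) by (simpl; field).
    eapply is_series_ext; [|apply is_series_geom; rewrite Rabs_R0; lra].
    intros [|k]; simpl; ring.
  - assert (Hp : 0 < cc_param n (S m) <= 1) by (apply cc_param_bounds; lia).
    eapply is_series_ext; [|apply (is_series_mult_pos _ _ _ _ (IH ltac:(lia))
                                    (is_series_geom_pgf _ _ Hp Hx))].
    + intros k. simpl partial_law. rewrite Rmult_comm, scal_sum.
      apply sum_eq. intros j Hj.
      replace (x ^ k) with (x ^ j * x ^ (k - j)) by (rewrite <- pow_add; f_equal; lia).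
      ring.
    + intros k. apply Rmult_le_pos; [apply partial_law_nonneg; lia|apply pow_le; lra].
    + intros k. apply Rmult_le_pos; [apply geom_pmf_nonneg; lra|apply pow_le; lra].
Qed.

Definition mgf_shift (lam : R) (n : nat) : R := INR n * (exp (lam / INR n) - 1).

Lemma mgf_shift_ge lam n : (1 <= n)%nat -> lam <= mgf_shift lam n.
Proof.
  intros Hn. unfold mgf_shift.
  assert (0 < INR n) by (apply lt_0_INR; lia).
  pose proof (exp_ineq1_le (lam / INR n)) as He.
  apply Rmult_le_compat_l with (r := INR n) in He; [|lra].
  replace (INR n * (1 + lam / INR n)) with (INR n + lam) in He by (field; lra).
  nra.
Qed.

Lemma geom_pgf_cc_param lam n i : 0 <= lam -> (1 <= i <= n)%nat ->
  geom_pgf (cc_param n i) (exp (- lam / INR n))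
  = INR (n - i + 1) / (INR (n - i + 1) + mgf_shift lam n).
Proof.
  intros Hlam Hi.
  assert (0 < INR n) by (apply lt_0_INR; lia).
  assert (1 <= INR (n - i + 1)) by (apply (le_INR 1); lia).
  pose proof (mgf_shift_ge lam n ltac:(lia)).
  unfold geom_pgf, cc_param, mgf_shift in *.
  replace (- lam / INR n) with (- (lam / INR n)) by (field; lra).
  rewrite exp_Ropp.
  assert (0 < exp (lam / INR n)) by apply exp_pos.
  field. nra.
Qed.

Lemma is_series_mgf_term lam n : 0 <= lam -> (1 <= n)%nat ->
  is_series (mgf_term lam n)
    (Rpower (INR n) lam * rprod (fun q => INR q / (INR q + mgf_shift lam n)) n).
Proof.
  intros Hlam Hn.
  assert (HN : 0 < INR n) by (apply lt_0_INR; lia).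
  set (x := exp (- lam / INR n)).
  assert (Hx : 0 <= x <= 1).
  { split; [left; apply exp_pos|]. rewrite <- exp_0. apply exp_le_exp.
    unfold Rdiv. rewrite Ropp_mult_distr_l_reverse.
    enough (0 <= lam * / INR n) by lra.
    apply Rmult_le_pos; [lra|left; apply Rinv_0_lt_compat; lra]. }
  rewrite <- (rprod_rev _ n).
  erewrite rprod_ext; cycle 1.
  { intros i Hi. replace (S n - i)%nat with (n - i + 1)%nat by lia.
    rewrite <- geom_pgf_cc_param by (auto; lia). reflexivity. }
  rewrite Rmult_comm.
  eapply is_series_ext;
    [|exact (is_series_scal_r (Rpower (INR n) lam) _ _
               (is_series_partial_law_pgf n n x (le_n n) Hx))].
  intros k. change (partial_law n n k * x ^ k * Rpower (INR n) lam = mgf_term lam n k).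
  unfold mgf_term, T_law, Z_val, x.
  rewrite <- Rpower_pow by apply exp_pos. unfold Rpower. rewrite ln_exp.
  replace (- lam * (INR k / INR n - ln (INR n)))
    with (lam * ln (INR n) + INR k * (- lam / INR n)) by (field; lra).
  rewrite exp_plus. ring.
Qed.

Lemma mgf_Z_closed_form lam n : 0 <= lam -> (1 <= n)%nat ->
  mgf_Z lam n
  = Rpower (INR n) lam * rprod (fun q => INR q / (INR q + mgf_shift lam n)) n.
Proof. intros. apply is_series_unique, is_series_mgf_term; assumption. Qed.

Lemma ratio_le_Rpower_ratio q a : 0 < q -> 0 <= a ->
  q / (q + a) <= Rpower (q + 1 + a) (- a) / Rpower (q + a) (- a).
Proof.
  intros Hq Ha. unfold Rpower, Rdiv at 2. rewrite <- exp_Ropp, <- exp_plus.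
  rewrite <- (exp_ln (q / (q + a))) by (apply Rdiv_lt_0_compat; lra).
  apply exp_le_exp. rewrite ln_div by lra.
  pose proof (ln_sub_le (q + a) q ltac:(lra) Hq) as Hdown.
  pose proof (ln_sub_le (q + a) (q + 1 + a) ltac:(lra) ltac:(lra)) as Hup.
  replace ((q - (q + a)) / (q + a)) with (- a * / (q + a)) in Hdown by (field; lra).
  replace ((q + 1 + a - (q + a)) / (q + a)) with (/ (q + a)) in Hup by (field; lra).
  assert (a * (ln (q + 1 + a) - ln (q + a)) <= a * / (q + a))
    by (apply Rmult_le_compat_l; lra).
  lra.
Qed.

Lemma mgf_Z_bounds lam n : 0 <= lam -> (1 <= n)%nat ->
  0 <= mgf_Z lam n <= Rpower (1 + lam) lam.
Proof.
  intros Hlam Hn.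
  assert (HN : 0 < INR n) by (apply lt_0_INR; lia).
  pose proof (mgf_shift_ge lam n Hn) as Hc.
  set (g := fun q : nat => Rpower (INR q + lam) (- lam)).
  assert (Hprod : 0 <= rprod (fun q => INR q / (INR q + mgf_shift lam n)) n
                    <= rprod (fun q => g (S q) / g q) n).
  { apply rprod_le. intros q Hq.
    assert (1 <= INR q) by (apply (le_INR 1); lia).
    split; [apply Rdiv_le_0_compat; lra|].
    apply Rle_trans with (INR q / (INR q + lam)).
    - apply Rmult_le_compat_l; [lra|]. apply Rinv_le_contravar; lra.
    - unfold g. rewrite S_INR. apply ratio_le_Rpower_ratio; lra. }
  rewrite rprod_telescope in Hprod by (intros q _; apply Rgt_not_eq, exp_pos).
  unfold g in Hprod. rewrite S_INR, !Rpower_Ropp in Hprod. simpl INR in Hprod.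
  rewrite mgf_Z_closed_form by assumption.
  assert (Hpow : Rpower (INR n) lam <= Rpower (INR n + 1 + lam) lam)
    by (apply Rle_Rpower_l; lra).
  assert (0 < Rpower (INR n) lam) by apply exp_pos.
  assert (0 < Rpower (INR n + 1 + lam) lam) by apply exp_pos.
  assert (0 < Rpower (1 + lam) lam) by apply exp_pos.
  split; [apply Rmult_le_pos; lra|].
  eapply Rle_trans; [apply Rmult_le_compat_l; [lra|apply Hprod]|].
  replace (/ Rpower (INR n + 1 + lam) lam / / Rpower (1 + lam) lam)
    with (Rpower (1 + lam) lam / Rpower (INR n + 1 + lam) lam) by (field; lra).
  apply Rmult_le_reg_r with (Rpower (INR n + 1 + lam) lam); [lra|].
  field_simplify; [|lra]. nra.
Qed.

Lemma Derive_n_exp k t : Derive_n exp k t = exp t.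
Proof.
  revert t. induction k as [|k IH]; intros t; [reflexivity|].
  simpl. rewrite (Derive_ext _ _ _ IH). apply is_derive_unique, is_derive_exp.
Qed.

Lemma exp_taylor1_bounds h : 0 <= h ->
  h ^ 2 / 2 <= exp h - 1 - h <= h ^ 2 / 2 * exp h.
Proof.
  intros Hh. split.
  - pose proof (exp_ge_taylor h 2 Hh) as Hlow. simpl in Hlow. lra.
  - destruct Hh as [Hh|<-]; [|rewrite exp_0; lra].
    destruct (Taylor_Lagrange exp 1 0 h Hh) as [z [Hz Hexp]].
    + intros t _ [|k] _; [exact I|].
      eapply ex_derive_ext; [intros u; symmetry; apply Derive_n_exp|].
      eexists. apply is_derive_exp.
    + rewrite Hexp at 1. cbn [sum_f_R0]. rewrite !Derive_n_exp, exp_0. simpl.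
      assert (exp z <= exp h) by (apply exp_le_exp; lra).
      assert (0 <= h * h) by nra.
      assert (h * h * exp z <= h * h * exp h) by (apply Rmult_le_compat_l; lra).
      lra.
Qed.

Definition shift_excess (n : nat) : R := mgf_shift 1 n - 1.

Lemma shift_excess_bounds n : (1 <= n)%nat ->
  / (2 * INR n) <= shift_excess n <= exp (/ INR n) / (2 * INR n).
Proof.
  intros Hn. assert (HN : 1 <= INR n) by (apply (le_INR 1); lia).
  assert (Hh : 0 <= / INR n) by (left; apply Rinv_0_lt_compat; lra).
  replace (shift_excess n) with (INR n * (exp (/ INR n) - 1 - / INR n))
    by (unfold shift_excess, mgf_shift, Rdiv; rewrite Rmult_1_l; field; lra).
  destruct (exp_taylor1_bounds _ Hh) as [Hlow Hup].
  apply Rmult_le_compat_l with (r := INR n) in Hlow, Hup; try lra.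
  replace (INR n * ((/ INR n) ^ 2 / 2)) with (/ (2 * INR n)) in Hlow by (field; lra).
  replace (INR n * ((/ INR n) ^ 2 / 2 * exp (/ INR n)))
    with (exp (/ INR n) / (2 * INR n)) in Hup by (field; lra).
  lra.
Qed.

Lemma shift_excess_pos n : (1 <= n)%nat -> 0 < shift_excess n.
Proof.
  intros Hn. apply Rlt_le_trans with (/ (2 * INR n)); [|apply shift_excess_bounds, Hn].
  apply Rinv_0_lt_compat, Rmult_lt_0_compat; [lra|apply lt_0_INR; lia].
Qed.

Definition harmonic_tail (m : nat) : R := rsum (fun q => / (INR q + 1)) m.

Lemma harmonic_tail_bounds m :
  ln (INR m + 2) - ln 2 <= harmonic_tail m <= ln (INR m + 1).
Proof.
  split.
  - apply Rle_trans with (rsum (fun q => ln (INR (S q) + 1) - ln (INR q + 1)) m).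
    + right. rewrite (rsum_telescope (fun q => ln (INR q + 1))), S_INR. simpl INR.
      replace (INR m + 1 + 1) with (INR m + 2) by ring.
      replace (1 + 1) with 2 by ring. reflexivity.
    + apply rsum_le. intros q Hq. rewrite S_INR.
      assert (0 <= INR q) by apply pos_INR.
      pose proof (ln_sub_le (INR q + 1) (INR q + 1 + 1) ltac:(lra) ltac:(lra)) as Hln.
      replace ((INR q + 1 + 1 - (INR q + 1)) / (INR q + 1)) with (/ (INR q + 1)) in Hln
        by (field; lra).
      exact Hln.
  - apply Rle_trans with (rsum (fun q => ln (INR (S q)) - ln (INR q)) m).
    + apply rsum_le. intros q Hq. rewrite S_INR.
      assert (1 <= INR q) by (apply (le_INR 1); lia).
      pose proof (ln_sub_le (INR q + 1) (INR q) ltac:(lra) ltac:(lra)) as Hln.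
      replace ((INR q - (INR q + 1)) / (INR q + 1)) with (- / (INR q + 1)) in Hln
        by (field; lra).
      lra.
    + right. rewrite (rsum_telescope (fun q => ln (INR q))), S_INR. simpl INR.
      rewrite ln_1. ring.
Qed.

Definition excess_prod (n : nat) : R :=
  rprod (fun q => 1 + shift_excess n / (INR q + 1)) n.

Lemma excess_prod_bounds n : (1 <= n)%nat ->
  1 + shift_excess n * harmonic_tail n <= excess_prod n /\
  1 - shift_excess n * harmonic_tail n <= / excess_prod n.
Proof.
  intros Hn. pose proof (shift_excess_pos n Hn).
  assert (Ha : forall q, (1 <= q <= n)%nat -> 0 <= shift_excess n / (INR q + 1)).
  { intros q _. assert (0 <= INR q) by apply pos_INR.
    apply Rdiv_le_0_compat; lra. }
  unfold harmonic_tail, excess_prod. rewrite <- rsum_scal.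
  split; [apply rprod_one_plus_ge|apply inv_rprod_one_plus_ge]; assumption.
Qed.

Lemma shift_excess_harmonic_nonneg n : (1 <= n)%nat ->
  0 <= shift_excess n * harmonic_tail n.
Proof.
  intros Hn. pose proof (shift_excess_pos n Hn).
  pose proof (harmonic_tail_bounds n) as [Hh _].
  assert (ln 2 <= ln (INR n + 2)) by (apply ln_le; [lra|pose proof (pos_INR n); lra]).
  apply Rmult_le_pos; lra.
Qed.

Lemma excess_prod_ge_1 n : (1 <= n)%nat -> 1 <= excess_prod n.
Proof.
  intros Hn. pose proof (shift_excess_harmonic_nonneg n Hn).
  pose proof (excess_prod_bounds n Hn) as [HQ _]. lra.
Qed.

Lemma rprod_succ_ratio m : rprod (fun q => INR q / (INR q + 1)) m = / (INR m + 1).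
Proof.
  rewrite (rprod_ext _ (fun q => / INR (S q) / / INR q)).
  - rewrite (rprod_telescope (fun q => / INR q))
      by (intros q Hq; apply Rinv_neq_0_compat, not_0_INR; lia).
    rewrite S_INR. simpl INR. field. pose proof (pos_INR m). lra.
  - intros q Hq. assert (1 <= INR q) by (apply (le_INR 1); lia).
    rewrite S_INR. field. lra.
Qed.

Lemma mgf_Z_one n : (1 <= n)%nat ->
  mgf_Z 1 n = INR n / (INR n + 1) / excess_prod n.
Proof.
  intros Hn. assert (HN : 1 <= INR n) by (apply (le_INR 1); lia).
  pose proof (shift_excess_pos n Hn).
  rewrite mgf_Z_closed_form, Rpower_1 by (lra || lia).
  rewrite (rprod_ext _ (fun q => INR q / (INR q + 1)
                                 * / (1 + shift_excess n / (INR q + 1)))).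
  - rewrite rprod_mult, rprod_inv, rprod_succ_ratio. fold (excess_prod n).
    pose proof (excess_prod_ge_1 n Hn).
    field. lra.
  - intros q Hq. assert (1 <= INR q) by (apply (le_INR 1); lia).
    replace (mgf_shift 1 n) with (1 + shift_excess n) by (unfold shift_excess; ring).
    field. lra.
Qed.

Lemma is_lim_seq_inv_INR : is_lim_seq (fun n => / INR n) 0.
Proof.
  replace (Finite 0) with (Rbar_inv p_infty) by reflexivity.
  apply is_lim_seq_inv; [apply is_lim_seq_INR|discriminate].
Qed.

Lemma is_lim_seq_ln_INR : is_lim_seq (fun n => ln (INR n)) p_infty.
Proof. eapply filterlim_comp; [exact is_lim_seq_INR|exact is_lim_ln_p]. Qed.

Lemma is_lim_seq_inv_ln_INR : is_lim_seq (fun n => / ln (INR n)) 0.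
Proof.
  replace (Finite 0) with (Rbar_inv p_infty) by reflexivity.
  apply is_lim_seq_inv; [apply is_lim_seq_ln_INR|discriminate].
Qed.

Lemma is_lim_seq_ln_INR_div : is_lim_seq (fun n => ln (INR n) / INR n) 0.
Proof.
  eapply filterlim_comp with (f := INR) (g := fun y => ln y / y);
    [exact is_lim_seq_INR|exact is_lim_div_ln_p].
Qed.

Lemma ln_INR_pos n : (2 <= n)%nat -> 0 < ln (INR n).
Proof.
  intros Hn. rewrite <- ln_1. apply ln_increasing; [lra|].
  apply (lt_INR 1). lia.
Qed.

Lemma is_lim_seq_shift_excess : is_lim_seq (fun n => 2 * INR n * shift_excess n) 1.
Proof.
  apply is_lim_seq_le_le_loc with (u := fun _ => 1) (w := fun n => exp (/ INR n)).
  - exists 1%nat. intros n Hn.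
    assert (0 < INR n) by (apply lt_0_INR; lia).
    destruct (shift_excess_bounds n Hn) as [Hlow Hup].
    apply Rmult_le_compat_l with (r := 2 * INR n) in Hlow, Hup; try lra.
    rewrite Rinv_r in Hlow by lra.
    replace (2 * INR n * (exp (/ INR n) / (2 * INR n))) with (exp (/ INR n)) in Hup
      by (field; lra).
    lra.
  - apply is_lim_seq_const.
  - rewrite <- exp_0. apply is_lim_seq_continuous; [|exact is_lim_seq_inv_INR].
    apply derivable_continuous_pt, derivable_pt_exp.
Qed.

Lemma is_lim_seq_harmonic_tail_ln :
  is_lim_seq (fun n => harmonic_tail n / ln (INR n)) 1.
Proof.
  apply is_lim_seq_le_le_loc
    with (u := fun n => 1 - ln 2 * / ln (INR n))
         (w := fun n => 1 + / INR n * / ln (INR n)).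
  - exists 2%nat. intros n Hn.
    assert (HL := ln_INR_pos n Hn).
    assert (HN : 2 <= INR n) by (apply (le_INR 2); lia).
    destruct (harmonic_tail_bounds n) as [Hlow Hup].
    assert (ln (INR n) <= ln (INR n + 2)) by (apply ln_le; lra).
    pose proof (ln_sub_le (INR n) (INR n + 1) ltac:(lra) ltac:(lra)) as Hln.
    replace ((INR n + 1 - INR n) / INR n) with (/ INR n) in Hln by (field; lra).
    replace (1 - ln 2 * / ln (INR n)) with ((ln (INR n) - ln 2) / ln (INR n))
      by (field; lra).
    replace (1 + / INR n * / ln (INR n)) with ((ln (INR n) + / INR n) / ln (INR n))
      by (field; lra).
    split; apply Rmult_le_compat_r; try (left; apply Rinv_0_lt_compat); lra.
  - pose proof (is_lim_seq_minus' _ _ _ _ (is_lim_seq_const 1)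
      (is_lim_seq_mult' _ _ _ _ (is_lim_seq_const (ln 2)) is_lim_seq_inv_ln_INR)) as Hlim.
    rewrite Rmult_0_r, Rminus_0_r in Hlim. exact Hlim.
  - pose proof (is_lim_seq_plus' _ _ _ _ (is_lim_seq_const 1)
      (is_lim_seq_mult' _ _ _ _ is_lim_seq_inv_INR is_lim_seq_inv_ln_INR)) as Hlim.
    rewrite Rmult_0_r, Rplus_0_r in Hlim. exact Hlim.
Qed.

Lemma is_lim_seq_excess_harmonic_scaled :
  is_lim_seq (fun n => 2 * INR n * shift_excess n * (harmonic_tail n / ln (INR n))) 1.
Proof.
  pose proof (is_lim_seq_mult' _ _ _ _ is_lim_seq_shift_excess
                is_lim_seq_harmonic_tail_ln) as Hlim.
  rewrite Rmult_1_r in Hlim. exact Hlim.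
Qed.

Lemma is_lim_seq_excess_harmonic :
  is_lim_seq (fun n => shift_excess n * harmonic_tail n) 0.
Proof.
  pose proof (is_lim_seq_mult' _ _ _ _ is_lim_seq_excess_harmonic_scaled
                is_lim_seq_ln_INR_div) as Hlim.
  pose proof (is_lim_seq_mult' _ _ _ _ Hlim (is_lim_seq_const (/ 2))) as Hlim2.
  rewrite Rmult_0_r, Rmult_0_l in Hlim2.
  eapply is_lim_seq_ext_loc; [|exact Hlim2].
  exists 2%nat. intros n Hn.
  assert (HL := ln_INR_pos n Hn).
  assert (0 < INR n) by (apply lt_0_INR; lia).
  field. lra.
Qed.

Lemma is_lim_seq_mgf_one_main :
  is_lim_seq (fun n => 2 * INR n * (1 - / excess_prod n) / ln (INR n)) 1.
Proof.
  set (v := fun n => 2 * INR n * shift_excess n * (harmonic_tail n / ln (INR n))).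
  apply is_lim_seq_le_le_loc
    with (u := fun n => v n / (1 + shift_excess n * harmonic_tail n)) (w := v).
  - exists 2%nat. intros n Hn.
    assert (HL := ln_INR_pos n Hn).
    assert (0 < INR n) by (apply lt_0_INR; lia).
    pose proof (shift_excess_harmonic_nonneg n ltac:(lia)) as Hy.
    pose proof (excess_prod_bounds n ltac:(lia)) as [HQ HiQ].
    set (y := shift_excess n * harmonic_tail n) in *.
    set (K := 2 * INR n / ln (INR n)).
    assert (HK : 0 < K) by (apply Rdiv_lt_0_compat; lra).
    assert (Hv : v n = K * y) by (unfold v, y, K; field; lra).
    replace (2 * INR n * (1 - / excess_prod n) / ln (INR n))
      with (K * (1 - / excess_prod n)) by (unfold K; field; lra).
    rewrite Hv.
    replace (K * y / (1 + y)) with (K * (1 - / (1 + y))) by (field; lra).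
    assert (/ excess_prod n <= / (1 + y)) by (apply Rinv_le_contravar; lra).
    split; apply Rmult_le_compat_l; lra.
  - pose proof (is_lim_seq_div' _ _ _ _ is_lim_seq_excess_harmonic_scaled
      (is_lim_seq_plus' _ _ _ _ (is_lim_seq_const 1) is_lim_seq_excess_harmonic)
      ltac:(lra)) as Hlim.
    replace (1 / (1 + 0)) with 1 in Hlim by field. exact Hlim.
  - exact is_lim_seq_excess_harmonic_scaled.
Qed.

Lemma is_lim_seq_mgf_one_rest :
  is_lim_seq (fun n => 2 * INR n / ((INR n + 1) * excess_prod n * ln (INR n))) 0.
Proof.
  apply is_lim_seq_le_le_loc with (u := fun _ => 0) (w := fun n => 2 * / ln (INR n)).
  - exists 2%nat. intros n Hn.
    assert (HL := ln_INR_pos n Hn).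
    assert (0 < INR n) by (apply lt_0_INR; lia).
    pose proof (excess_prod_ge_1 n ltac:(lia)).
    assert (Hden : 0 < (INR n + 1) * excess_prod n * ln (INR n))
      by (apply Rmult_lt_0_compat; [apply Rmult_lt_0_compat|]; lra).
    assert (Hgap : 2 * / ln (INR n)
                   - 2 * INR n / ((INR n + 1) * excess_prod n * ln (INR n))
                   = 2 * ((INR n + 1) * excess_prod n - INR n)
                     / ((INR n + 1) * excess_prod n * ln (INR n)))
      by (field; split; lra).
    assert (0 <= 2 * ((INR n + 1) * excess_prod n - INR n)
                 / ((INR n + 1) * excess_prod n * ln (INR n)))
      by (apply Rdiv_le_0_compat; nra).
    split; [apply Rdiv_le_0_compat; lra|lra].
  - apply is_lim_seq_const.
  - pose proof (is_lim_seq_mult' _ _ _ _ (is_lim_seq_const 2) is_lim_seq_inv_ln_INR)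
      as Hlim.
    rewrite Rmult_0_r in Hlim. exact Hlim.
Qed.

Lemma mgf_Z_one_ratio_split n : (2 <= n)%nat ->
  (mgf_Z 1 n - 1) / (- ln (INR n) / (2 * INR n))
  = 2 * INR n * (1 - / excess_prod n) / ln (INR n)
    + 2 * INR n / ((INR n + 1) * excess_prod n * ln (INR n)).
Proof.
  intros Hn.
  assert (HL := ln_INR_pos n Hn).
  assert (0 < INR n) by (apply lt_0_INR; lia).
  pose proof (excess_prod_ge_1 n ltac:(lia)).
  rewrite mgf_Z_one by lia.
  field. repeat split; lra.
Qed.

Theorem lemma4p4 :
  (forall lam : R, 0 <= lam ->
     exists M : R, forall n : nat, (1 <= n)%nat ->
       ex_series (mgf_term lam n) /\ Rabs (mgf_Z lam n) <= M) /\
  is_lim_seq (fun n : nat => (mgf_Z 1 n - 1) / (- ln (INR n) / (2 * INR n))) 1.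
Proof.
  split.
  - intros lam Hlam. exists (Rpower (1 + lam) lam). intros n Hn. split.
    + eexists. exact (is_series_mgf_term lam n Hlam Hn).
    + destruct (mgf_Z_bounds lam n Hlam Hn). rewrite Rabs_pos_eq; assumption.
  - pose proof (is_lim_seq_plus' _ _ _ _ is_lim_seq_mgf_one_main
                  is_lim_seq_mgf_one_rest) as Hlim.
    rewrite Rplus_0_r in Hlim.
    eapply is_lim_seq_ext_loc; [|exact Hlim].
    exists 2%nat. intros n Hn. symmetry. exact (mgf_Z_one_ratio_split n Hn).
Qed.
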